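(* Let $(\mathcal T_r)_{r\in\mathbb Z}$ be any generalized Tribonacci sequence. Then for every integer $r$ and every non-negative integer $k$: \[ 103\sum_{j=0}^k56^j\mathcal T_{r+16+17j}=56^{k+1}\mathcal T_{r+17k+17}-\mathcal T_r, \] \[ 56\sum_{j=0}^k(-1)^j103^j\mathcal T_{r+17+16j}=\mathcal T_r-(-103)^{k+1}\mathcal T_{r+16k+16}, \] \[ \sum_{j=0}^k103^{k-j}56^j\mathcal T_{r-16+j}=-103^{k+1}\mathcal T_r+56^{k+1}\mathcal T_{r+k+1}. \]
   Context: A generalized Tribonacci sequence is a two-sided sequence $(\mathcal T_r)_{r\in\mathbb Z}$ of complex numbers with $\mathcal T_r=\mathcal T_{r-1}+\mathcal T_{r-2}+\mathcal T_{r-3}$ for all $r\in\mathbb Z$. *)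

(* Complex numbers are modelled by an arbitrary
   numClosedFieldType (algebraically closed numeric field, e.g. algC);
   the identities are purely algebraic. *)
From HB Require Import structures.
From mathcomp Require Import all_boot all_order all_algebra.
Set Implicit Arguments. Unset Strict Implicit. Unset Printing Implicit Defensive.
Import Order.TTheory GRing.Theory Num.Theory.
Local Open Scope ring_scope.

Definition is_gen_tribonacci (C : numClosedFieldType) (T : int -> C) : Prop :=
  forall r : int, T r = T (r - 1) + T (r - 2) + T (r - 3).

From HB Require Import structures.
From mathcomp Require Import all_boot all_order all_algebra.
From mathcomp Require Import ring zify.
Import Order.TTheory GRing.Theory Num.Theory.
Local Open Scope ring_scope.

(* A solution of the Tribonacci recurrence is determined by three consecutive
   values, and T (s + n) is an integer combination of T s, T (s + 1), T (s + 2)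
   whose coefficients are Tribonacci numbers.  Comparing the combinations for
   n = 16 and n = 17 yields the single relation
   103 T (s + 16) = 56 T (s + 17) - T s;
   each of the three identities is this relation, suitably weighted by powers
   of 56 and 103, summed as a telescoping sum. *)

Fixpoint tribonacci (n : nat) : nat :=
  match n with
  | 0 | 1 => 0
  | 2 => 1
  | ((m.+1 as m1).+1 as m2).+1 => tribonacci m + tribonacci m1 + tribonacci m2
  end.

Section TribonacciIdentities.
Variables (R : comPzRingType) (T : int -> R).
Hypothesis trib_rec : forall r : int, T r = T (r - 1) + T (r - 2) + T (r - 3).

Lemma trib_rec_add (s : int) (n : nat) :
  T (s + n.+3%:Z) = T (s + n%:Z) + T (s + n.+1%:Z) + T (s + n.+2%:Z).
Proof.
rewrite trib_rec.
have -> : s + n.+3%:Z - 1 = s + n.+2%:Z by lia.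
have -> : s + n.+3%:Z - 2 = s + n.+1%:Z by lia.
have -> : s + n.+3%:Z - 3 = s + n%:Z by lia.
ring.
Qed.

Lemma trib_decomp (s : int) (n : nat) :
  T (s + n.+2%:Z) =
    (tribonacci n.+2)%:R * T (s + 2%:Z)
  + (tribonacci n.+1 + tribonacci n)%:R * T (s + 1%:Z)
  + (tribonacci n.+1)%:R * T s.
Proof.
pose P m := T (s + m.+2%:Z) =
    (tribonacci m.+2)%:R * T (s + 2%:Z)
  + (tribonacci m.+1 + tribonacci m)%:R * T (s + 1%:Z)
  + (tribonacci m.+1)%:R * T s.
suff /(_ n) [] : forall m, [/\ P m, P m.+1 & P m.+2] by [].
elim=> [|m [Pm Pm1 Pm2]].
  have T3 := trib_rec_add s 0; rewrite addr0 in T3.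
  by split; rewrite /P ?(trib_rec_add s 1) ?T3 /=; ring.
by split=> //; rewrite /P trib_rec_add Pm Pm1 Pm2 /= !natrD; ring.
Qed.

(* Uses [tribonacci 14 .. tribonacci 17 = 927, 1705, 3136, 5768]. *)
Lemma trib_relation_16_17 (s : int) :
  103%:R * T (s + 16) = 56%:R * T (s + 17) - T s.
Proof.
have -> : s + 16 = s + 14.+2%:Z by [].
have -> : s + 17 = s + 15.+2%:Z by [].
by rewrite (trib_decomp s 14) (trib_decomp s 15) /=; ring.
Qed.

Lemma trib_sum_step17 (r : int) (k : nat) :
  103%:R * (\sum_(0 <= j < k.+1) 56%:R ^+ j * T (r + 16 + 17 * j%:Z))
  = 56%:R ^+ k.+1 * T (r + 17 * k%:Z + 17) - T r.
Proof.
rewrite mulr_sumr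
  (@telescope_sumr_eq _ 0 k.+1 (fun j => 56%:R ^+ j * T (r + 17 * j%:Z))) //=.
  by rewrite mul1r addr0; congr (_ * T _ - _); lia.
move=> j _; rewrite mulrCA -addrAC trib_relation_16_17 exprS.
have -> : r + 17 * j%:Z + 17 = r + 17 * j.+1%:Z by lia.
ring.
Qed.

Lemma trib_sum_step16 (r : int) (k : nat) :
  56%:R * (\sum_(0 <= j < k.+1) (-1) ^+ j * 103%:R ^+ j * T (r + 17 + 16 * j%:Z))
  = T r - (- 103%:R) ^+ k.+1 * T (r + 16 * k%:Z + 16).
Proof.
rewrite mulr_sumr (@telescope_sumr_eq _ 0 k.+1
  (fun j => - ((- 103%:R) ^+ j * T (r + 16 * j%:Z)))) //=.
  by rewrite mul1r addr0 opprK addrC; congr (_ - _ * T _); lia.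
move=> j _; rewrite -exprMn mulN1r.
have E := trib_relation_16_17 (r + 16 * j%:Z).
have -> : r + 16 * j.+1%:Z = r + 16 * j%:Z + 16 by lia.
have -> : r + 17 + 16 * j%:Z = r + 16 * j%:Z + 17 by lia.
rewrite exprS.
ring: E.
Qed.

Lemma trib_sum_shift (r : int) (k : nat) :
  \sum_(0 <= j < k.+1) 103%:R ^+ (k - j) * 56%:R ^+ j * T (r - 16 + j%:Z)
  = - 103%:R ^+ k.+1 * T r + 56%:R ^+ k.+1 * T (r + k%:Z + 1).
Proof.
rewrite (@telescope_sumr_eq _ 0 k.+1
  (fun j => 103%:R ^+ (k.+1 - j) * 56%:R ^+ j * T (r + j%:Z))) //=.
  by rewrite subn0 subnn addr0 (_ : r + k.+1%:Z = r + k%:Z + 1); [ring | lia].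
move=> j ltjk.
have E : T (r - 16 + j%:Z) = 56%:R * T (r + j.+1%:Z) - 103%:R * T (r + j%:Z).
  rewrite (_ : r + j%:Z = r - 16 + j%:Z + 16); last lia.
  rewrite (_ : r + j.+1%:Z = r - 16 + j%:Z + 17); last lia.
  by rewrite trib_relation_16_17; ring.
by rewrite E subSS subSn // !exprS; ring.
Qed.

End TribonacciIdentities.

Theorem mainTheorem9 (C : numClosedFieldType) (T : int -> C)
  (hT : is_gen_tribonacci T) (r : int) (k : nat) :
  [/\ 103%:R * (\sum_(0 <= j < k.+1) 56%:R ^+ j * T (r + 16 + 17 * j%:Z))
        = 56%:R ^+ k.+1 * T (r + 17 * k%:Z + 17) - T r,
      56%:R * (\sum_(0 <= j < k.+1) (-1) ^+ j * 103%:R ^+ j * T (r + 17 + 16 * j%:Z))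
        = T r - (- 103%:R) ^+ k.+1 * T (r + 16 * k%:Z + 16)
    & \sum_(0 <= j < k.+1) 103%:R ^+ (k - j) * 56%:R ^+ j * T (r - 16 + j%:Z)
        = - 103%:R ^+ k.+1 * T r + 56%:R ^+ k.+1 * T (r + k%:Z + 1)].
Proof.
split; [exact: trib_sum_step17 | exact: trib_sum_step16 | exact: trib_sum_shift].
Qed.
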